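(* If $V$ is a simple abelian intertwining algebra associated to an abelian group $A$ with normalized abelian $3$-cocycle $(F,\Omega)$, then the $V^0$-modules $V^\alpha$ are simple for all $\alpha\in A$. In particular, $V^0$ is a simple vertex operator algebra.
   Context: Normalized abelian $3$-cocycle: $F:A^3\to\mathbb C^\times$, $\Omega:A^2\to\mathbb C^\times$ with $F(\alpha_1,\alpha_2,\alpha_3)F(\alpha_1,\alpha_2+\alpha_3,\alpha_4)F(\alpha_2,\alpha_3,\alpha_4)=F(\alpha_1,\alpha_2,\alpha_3+\alpha_4)F(\alpha_1+\alpha_2,\alpha_3,\alpha_4)$, $F(\alpha_1,\alpha_2,\alpha_3)\Omega(\alpha_1+\alpha_2,\alpha_3)F(\alpha_3,\alpha_1,\alpha_2)=\Omega(\alpha_2,\alpha_3)F(\alpha_1,\alpha_3,\alpha_2)\Omega(\alpha_1,\alpha_3)$, $F(\alpha_1,\alpha_2,\alpha_3)^{-1}\Omega(\alpha_1,\alpha_2+\alpha_3)F(\alpha_2,\alpha_3,\alpha_1)^{-1}=\Omega(\alpha_1,\alpha_2)F(\alpha_2,\alpha_1,\alpha_3)^{-1}\Omega(\alpha_1,\alpha_3)$, and $F=1$ if an argument is $0$. Fix $\hat b$ with $e^{2\pi i\hat b(\alpha_1,\alpha_2)}=\Omega(\alpha_1,\alpha_2)\Omega(\alpha_2,\alpha_1)$, $B(\alpha_1,\alpha_2,\alpha_3)=F(\alpha_1,\alpha_2,\alpha_3)\Omega(\alpha_1,\alpha_2)F(\alpha_2,\alpha_1,\alpha_3)^{-1}$.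 An abelian intertwining algebra associated to $(A,F,\Omega)$: $A\times\mathbb C$-graded $V=\bigoplus V^\alpha_{(n)}$ (for each $\alpha$ and $R\in\mathbb R$, $V^\alpha_{(n)}=0$ for all but finitely many $n$ with $\mathrm{Re}\,n\le R$), $Y(v,x)=\sum_{n\in\mathbb C}v_nx^{-n-1}$, $\mathbf 1\in V^0_{(0)}$, $\omega\in V^0_{(2)}$, with $x^{\hat b(\alpha_1,\alpha_2)}Y(v_1,x)v_2\in V^{\alpha_1+\alpha_2}((x))$ for $v_i\in V^{\alpha_i}$; $Y(\mathbf 1,x)=\mathrm{id}$, $Y(v,x)\mathbf 1\in V[[x]]$ with constant term $v$; Jacobi identity $x_0^{-1}\big(\tfrac{x_1-x_2}{x_0}\big)^{\hat b(\alpha_1,\alpha_2)}\delta\big(\tfrac{x_1-x_2}{x_0}\big)Y(v_1,x_1)Y(v_2,x_2)v_3-B(\alpha_1,\alpha_2,\alpha_3)x_0^{-1}\big(\tfrac{x_2-x_1}{e^{\pi i}x_0}\big)^{\hat b(\alpha_1,\alpha_2)}\delta\big(\tfrac{x_2-x_1}{-x_0}\big)Y(v_2,x_2)Y(v_1,x_1)v_3=F(\alpha_1,\alpha_2,\alpha_3)x_1^{-1}\big(\tfrac{x_2+x_0}{x_1}\big)^{\hat b(\alpha_1,\alpha_3)}\delta\big(\tfrac{x_2+x_0}{x_1}\big)Y(Y(v_1,x_0)v_2,x_2)v_3$; $Y(\omega,x)=\sum L(n)x^{-n-2}$ satisfies the Virasoro relations and $V_{(n)}=\bigoplus_\alpha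 V^\alpha_{(n)}$ is the $L(0)$-eigenspace of eigenvalue $n$; $Y(L(-1)v,x)=\frac{d}{dx}Y(v,x)$. $V^\alpha=\bigoplus_nV^\alpha_{(n)}$; $V^0$ is a vertex operator algebra and each $V^\alpha$ a $V^0$-module. $V$ is simple if the only $A$-graded subspaces closed under all $v_n$, $v\in V$, $n\in\mathbb C$, are $0$ and $V$. *)

From HB Require Import structures.
From mathcomp Require Import all_boot all_order all_algebra.
From mathcomp Require Import complex.
From mathcomp Require Import boolp reals sequences exp trigo.

Set Implicit Arguments.
Unset Strict Implicit.
Unset Printing Implicit Defensive.

Import Order.TTheory GRing.Theory Num.Theory.
Local Open Scope ring_scope.

Section AIA.

(* The complex numbers are R[i] for a real type R (all realTypes are
   isomorphic to the reals, so quantifying over R is harmless). *)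
Variable R : realType.
Local Notation C := (R[i]).

Definition cexp (z : C) : C := Complex (expR (@complex.Re R z)) 0 * Complex (cos (@complex.Im R z)) (sin (@complex.Im R z)).

Definition ipi : C := Complex 0 pi.

Definition cbinom (c : C) (k : nat) : C :=
  (\prod_(j < k) (c - j%:R)) / (k`!)%:R.

Definition isint (z : C) : bool := `[< exists k : int, z = k%:~R >].

Variable A : zmodType.

Definition normalized_abelian_3cocycle
  (F : A -> A -> A -> C) (Om : A -> A -> C) : Prop :=
  [/\ (forall a1 a2 a3, F a1 a2 a3 != 0) /\ (forall a1 a2, Om a1 a2 != 0),
      (forall a1 a2 a3 a4,
         F a1 a2 a3 * F a1 (a2 + a3) a4 * F a2 a3 a4
         = F a1 a2 (a3 + a4) * F (a1 + a2) a3 a4),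
      (forall a1 a2 a3,
         F a1 a2 a3 * Om (a1 + a2) a3 * F a3 a1 a2
         = Om a2 a3 * F a1 a3 a2 * Om a1 a3),
      (forall a1 a2 a3,
         (F a1 a2 a3)^-1 * Om a1 (a2 + a3) * (F a2 a3 a1)^-1
         = Om a1 a2 * (F a2 a1 a3)^-1 * Om a1 a3) &
      (forall a1 a2 a3, [|| a1 == 0, a2 == 0 | a3 == 0] -> F a1 a2 a3 = 1)].

Definition Bfac (F : A -> A -> A -> C) (Om : A -> A -> C) (a1 a2 a3 : A) : C :=
  F a1 a2 a3 * Om a1 a2 / F a2 a1 a3.

Variable V : lmodType C.

(* The A x C grading of V is encoded by the family of projections
   pr a n : V -> V onto V^a_(n) (see [graded] below).
   v lies in V^a = (+)_n V^a_(n)  iff all its components of other A-degree vanish. *)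
Definition inVa (pr : A -> C -> V -> V) (a : A) (v : V) : Prop :=
  forall b n, b != a -> pr b n v = 0.

Definition fsum_is (f : nat -> V) (s : V) : Prop :=
  exists N, (forall k, (N <= k)%N -> f k = 0) /\ s = \sum_(k < N) f k.

(* L(m) = omega_{m+1}, since Y(omega, x) = sum_n L(n) x^{-n-2} *)
Definition Lop (mode : V -> C -> V -> V) (om : V) (m : int) : V -> V :=
  mode om (m%:~R + 1).

(* Coefficients of x0^r0 x1^r1 x2^r2 in the three terms of the Jacobi identity
   (the sums over k come from the binomial expansions of (x1-x2)^c in
   nonnegative powers of x2, (x2-x1)^c in nonnegative powers of x1, and
   (x2+x0)^c in nonnegative powers of x0; Y(v,x) = sum_n v_n x^{-n-1}). *)
Definition jac1 (mode : V -> C -> V -> V) (v1 v2 v3 : V) (r0 r1 r2 : C) (k : nat) : V :=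
  (cbinom (- r0 - 1) k * (-1) ^+ k) *:
    mode v1 (- r0 - r1 - k%:R - 2) (mode v2 (k%:R - 1 - r2) v3).

Definition jac2 (mode : V -> C -> V -> V) (v1 v2 v3 : V) (r0 r1 r2 : C) (k : nat) : V :=
  (cbinom (- r0 - 1) k * (-1) ^+ k) *:
    mode v2 (- r0 - r2 - k%:R - 2) (mode v1 (k%:R - 1 - r1) v3).

Definition jac3 (mode : V -> C -> V -> V) (v1 v2 v3 : V) (r0 r1 r2 : C) (k : nat) : V :=
  cbinom (- r1 - 1) k *: mode (mode v1 (k%:R - 1 - r0) v2) (- r1 - r2 - k%:R - 2) v3.

(* Abelian intertwining algebra associated to (A, F, Omega), with the fixed
   choice of bhat; data: grading projections pr, modes mode v n w = v_n w,
   vacuum one, conformal vector om. *)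
Record is_AIA (F : A -> A -> A -> C) (Om : A -> A -> C) (bh : A -> A -> C)
  (pr : A -> C -> V -> V) (mode : V -> C -> V -> V) (one om : V) : Prop := {
  (* V = (+)_{a,n} V^a_(n) *)
  pr_linear : forall a n c u v, pr a n (c *: u + v) = c *: pr a n u + pr a n v;
  pr_proj : forall a n b m v,
      pr a n (pr b m v) = if (a == b) && (n == m) then pr b m v else 0;
  pr_decomp : forall v, exists s : seq (A * C),
      uniq s /\ v = \sum_(p <- s) pr p.1 p.2 v;
  grading_truncation : forall (a : A) (r : R), exists s : seq C,
      forall n, @complex.Re R n <= r -> n \notin s -> forall v, pr a n v = 0;
  mode_linear_l : forall n w c u v,
      mode (c *: u + v) n w = c *: mode u n w + mode v n w;
  mode_linear_r : forall v n c u w,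
      mode v n (c *: u + w) = c *: mode v n u + mode v n w;
  (* x^{bhat(a1,a2)} Y(v1,x) v2 \in V^{a1+a2}((x)) *)
  mode_truncation : forall a1 a2 v1 v2, inVa pr a1 v1 -> inVa pr a2 v2 ->
      (forall n, inVa pr (a1 + a2) (mode v1 n v2)) /\
      exists N : int, forall n, mode v1 n v2 != 0 ->
        exists k : int, N <= k /\ bh a1 a2 - n - 1 = k%:~R;
  vacuum_deg : pr 0 0 one = one;
  vacuum_id : forall n w, mode one n w = if n == -1 then w else 0;
  creation_reg : forall v n, mode v n one != 0 ->
      exists k : nat, n = - k%:R - 1;
  creation_const : forall v, mode v (-1) one = v;
  (* Jacobi identity, coefficient of x0^r0 x1^r1 x2^r2 *)
  jacobi : forall a1 a2 a3 v1 v2 v3,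
      inVa pr a1 v1 -> inVa pr a2 v2 -> inVa pr a3 v3 ->
      forall r0 r1 r2 : C, exists s1 s2 s3 : V,
        [/\ fsum_is (jac1 mode v1 v2 v3 r0 r1 r2) s1,
            fsum_is (jac2 mode v1 v2 v3 r0 r1 r2) s2,
            fsum_is (jac3 mode v1 v2 v3 r0 r1 r2) s3 &
            (if isint (- r0 - bh a1 a2 - 1)
             then s1 - (Bfac F Om a1 a2 a3 * cexp (ipi * (r0 + 1))) *: s2
             else 0)
            = (if isint (- r1 - bh a1 a3 - 1) then F a1 a2 a3 *: s3 else 0)];
  omega_deg : pr 0 2 om = om;
  omega_int_modes : forall n w, mode om n w != 0 -> isint n;
  virasoro : exists c : C, forall (m n : int) w,
      Lop mode om m (Lop mode om n w) - Lop mode om n (Lop mode om m w)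
      = (m - n)%:~R *: Lop mode om (m + n) w
        + (if m + n == 0 then (m ^+ 3 - m)%:~R / 12%:R * c else 0) *: w;
  L0_eigen : forall (n : C) v,
      Lop mode om 0 v = n *: v <-> (forall a m, m != n -> pr a m v = 0);
  (* Y(L(-1)v, x) = d/dx Y(v, x) *)
  L_1_derivative : forall v m w,
      mode (Lop mode om (-1) v) m w = - m *: mode v (m - 1) w
}.

Definition subspace (W : V -> Prop) : Prop :=
  W 0 /\ forall c u v, W u -> W v -> W (c *: u + v).

Definition Agraded (pr : A -> C -> V -> V) (W : V -> Prop) : Prop :=
  forall w, W w -> exists s : seq (A * V),
    w = \sum_(p <- s) p.2 /\ (forall p, p \in s -> W p.2 /\ inVa pr p.1 p.2).

Definition simple_AIA (pr : A -> C -> V -> V) (mode : V -> C -> V -> V) : Prop :=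
  forall W, subspace W -> Agraded pr W ->
    (forall v n w, W w -> W (mode v n w)) ->
    (forall w, W w -> w = 0) \/ (forall w, W w).

Definition simple_Va_module (pr : A -> C -> V -> V) (mode : V -> C -> V -> V)
  (a : A) : Prop :=
  forall W, subspace W -> (forall w, W w -> inVa pr a w) ->
    (forall u n w, inVa pr 0 u -> W w -> W (mode u n w)) ->
    (forall w, W w -> w = 0) \/ (forall w, inVa pr a w -> W w).

End AIA.

From HB Require Import structures.
From mathcomp Require Import all_boot all_order all_algebra.
From mathcomp Require Import complex.
From mathcomp Require Import boolp reals sequences exp trigo.
From mathcomp Require Import ring zify.

(* Let W <> 0 be a V^0-submodule of V^a.  The span T of all v_n w, with v
   homogeneous and w in W, is A-graded and contains W, since w = 1_{-1} w.  It is
   closed under all modes: for homogeneous u, a coefficient of the Jacobi identity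
   in which every u_j w vanishes by truncation expresses u_m v_n w through the
   iterates (u_j v)_l w, which lie in T, and the terms u_m' v_{n+k+1} w, which lie
   in T by upward induction on n since v_n w = 0 for n large.  Simplicity of V
   forces T = V, and the V^a-component of T is W because v_n w lies in V^{b+a} for
   v in V^b. *)

Set Implicit Arguments.
Unset Strict Implicit.
Unset Printing Implicit Defensive.

Import GRing.Theory Num.Theory.
Local Open Scope ring_scope.

Section LinearFor.

Variables (K : pzRingType) (U W : lmodType K) (f : U -> W).
Hypothesis f_lin : forall c u v, f (c *: u + v) = c *: f u + f v.

Lemma lin0 : f 0 = 0.
Proof.
have := f_lin 1 0 0; rewrite !scale1r addr0 => f00.
by apply: (@addrI _ (f 0)); rewrite addr0 -f00.
Qed.

Lemma linD u v : f (u + v) = f u + f v.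
Proof. by have := f_lin 1 u v; rewrite !scale1r. Qed.

Lemma linZ c u : f (c *: u) = c *: f u.
Proof. by rewrite -[c *: u]addr0 f_lin lin0 addr0. Qed.

Lemma lin_sum (I : Type) (s : seq I) (g : I -> U) :
  f (\sum_(i <- s) g i) = \sum_(i <- s) f (g i).
Proof. exact: (big_morph f linD lin0). Qed.

End LinearFor.

Section Subspace.

Variables (R : realType) (V : lmodType R[i]) (P : V -> Prop).
Hypothesis P_sub : subspace P.

Lemma subspace0 : P 0.
Proof. exact: P_sub.1. Qed.

Lemma subspaceD u v : P u -> P v -> P (u + v).
Proof. by move=> Pu Pv; have := P_sub.2 1 u v Pu Pv; rewrite scale1r. Qed.

Lemma subspaceZ c u : P u -> P (c *: u).
Proof. by move=> Pu; rewrite -[c *: u]addr0; apply: P_sub.2 => //; apply: subspace0. Qed.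

Lemma subspaceB u v : P u -> P v -> P (u - v).
Proof. by move=> Pu Pv; rewrite -scaleN1r; apply: subspaceD => //; apply: subspaceZ. Qed.

Lemma subspace_sum (I : Type) (s : seq I) (g : I -> V) :
  (forall i, P (g i)) -> P (\sum_(i <- s) g i).
Proof. by move=> Pg; apply: big_ind => //; [exact: subspace0 | exact: subspaceD]. Qed.

End Subspace.

Section IntegerShifts.

Variable K : numDomainType.

Lemma exists_int_shift_below (z : K) (N : int) :
  exists p : int, forall (k : nat) (j : int), z - p%:~R - k%:R = j%:~R -> j < N.
Proof.
have [[q ->]|z_notint] := pselect (exists q : int, z = q%:~R).
  exists (q - N + 1) => k j ejk.
  have : q - (q - N + 1) - k%:Z = j by apply: (@intr_inj K); rewrite -ejk; ring.
  lia.
exists 0 => k j ejk; exfalso; apply: z_notint; exists (j + k%:Z).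
by rewrite intrD -ejk; ring.
Qed.

Lemma int_ray_ind (Q : K -> Prop) (z : K) (N : int) :
  (forall n, (forall j : int, z - n = j%:~R -> j < N) -> Q n) ->
  (forall n, (forall k : nat, Q (n + k.+1%:R)) -> Q n) ->
  forall n, Q n.
Proof.
move=> Qbase Qstep.
have Qd (d : nat) n : (forall j : int, z - n = j%:~R -> j < N + d%:Z) -> Q n.
  elim: d n => [|d IHd] n below; first by apply: Qbase => j /below; rewrite addr0.
  apply: Qstep => k; apply: IHd => j ej.
  have : j + k.+1%:Z < N + d.+1%:Z by apply: below; rewrite intrD -ej; ring.
  lia.
move=> n; have [[j0 ej0]|z_notint] := pselect (exists j0 : int, z - n = j0%:~R).
  apply: (Qd `|j0 - N|.+1) => j ej.
  have -> : j = j0 by apply: (@intr_inj K); rewrite -ej.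
  lia.
by apply: (Qd 0) => j ej; exfalso; apply: z_notint; exists j.
Qed.

End IntegerShifts.

Section AIA.

Variables (R : realType) (A : zmodType).
Variables (F : A -> A -> A -> R[i]) (Om bh : A -> A -> R[i]).
Variables (V : lmodType R[i]) (pr : A -> R[i] -> V -> V).
Variables (mode : V -> R[i] -> V -> V) (one om : V).
Hypothesis V_AIA : is_AIA F Om bh pr mode one om.

Lemma mode_suml n w (I : Type) (s : seq I) (g : I -> V) :
  mode (\sum_(i <- s) g i) n w = \sum_(i <- s) mode (g i) n w.
Proof. exact: (@lin_sum _ _ _ (fun u => mode u n w) (mode_linear_l V_AIA n w)). Qed.

Lemma mode0r v n : mode v n 0 = 0.
Proof. exact: lin0 (mode_linear_r V_AIA v n). Qed.

Lemma modeDr v n : {morph mode v n : x y / x + y}.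
Proof. exact: linD (mode_linear_r V_AIA v n). Qed.

Lemma modeZr v n c x : mode v n (c *: x) = c *: mode v n x.
Proof. exact: linZ (mode_linear_r V_AIA v n) c x. Qed.

Lemma pr0 b n : pr b n 0 = 0.
Proof. exact: lin0 (pr_linear V_AIA b n). Qed.

Lemma prD b n : {morph pr b n : x y / x + y}.
Proof. exact: linD (pr_linear V_AIA b n). Qed.

Lemma prZ b n c x : pr b n (c *: x) = c *: pr b n x.
Proof. exact: linZ (pr_linear V_AIA b n) c x. Qed.

Lemma inVaZ b c x : inVa pr b x -> inVa pr b (c *: x).
Proof. by move=> x_b b' n ne; rewrite prZ x_b // scaler0. Qed.

Lemma inVa_pr b n v : inVa pr b (pr b n v).
Proof. by move=> b' n' ne; rewrite (pr_proj V_AIA) (negbTE ne). Qed.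

Lemma inVa_one : inVa pr 0 one.
Proof. by rewrite -(vacuum_deg V_AIA); apply: inVa_pr. Qed.

Lemma pr_eq0 x : (forall b n, pr b n x = 0) -> x = 0.
Proof. by move=> x0; have [s [_ ->]] := pr_decomp V_AIA x; apply: big1 => p _. Qed.

Lemma modes_vanish_above c a u w (x : R[i]) : inVa pr c u -> inVa pr a w ->
  exists p : int, forall k : nat, mode u (x + p%:~R + k%:R) w = 0.
Proof.
move=> u_c w_a; have [_ [N uwN]] := mode_truncation V_AIA u_c w_a.
have [p below] := exists_int_shift_below (bh c a - x - 1) N.
exists p => k; apply/eqP; apply: contraT => uw_neq0.
have [j [Nj ej]] := uwN _ uw_neq0.
have : j < N by apply: (below k); rewrite -ej; ring.
lia.
Qed.

Lemma mode_mode_jacobi (P : V -> Prop) c b a u v w (m n : R[i]) (p : int) :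
  subspace P -> inVa pr c u -> inVa pr b v -> inVa pr a w ->
  (forall k : nat, mode u (m - bh c b + p%:~R + k%:R) w = 0) ->
  (forall j l, P (mode (mode u j v) l w)) ->
  (forall m' (k : nat), P (mode u m' (mode v (n + k.+1%:R) w))) ->
  P (mode u m (mode v n w)).
Proof.
move=> P_sub u_c v_b w_a uw0 P_iterate P_higher.
(* r0 puts the coefficient on the support of the delta functions, r1 and r2 make
   the k = 0 term of the first sum u_m v_n w, and uw0 kills the second sum. *)
pose r0 := - bh c b - 1 + p%:~R; pose r1 := bh c b - m - 1 - p%:~R; pose r2 := -1 - n.
have [s1 [s2 [s3 [[K [K_trunc ->]] [K2 [_ ->]] [K3 [_ ->]] jac]]]] :=
  jacobi V_AIA u_c v_b w_a r0 r1 r2.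
have r0_int : isint (- r0 - bh c b - 1) by apply: asboolT; exists (- p); rewrite /r0; ring.
have second_vanishes : \sum_(k < K2) jac2 mode u v w r0 r1 r2 k = 0.
  apply: big1 => k _; rewrite /jac2.
  have -> : k%:R - 1 - r1 = m - bh c b + p%:~R + k%:R by rewrite /r1; ring.
  by rewrite uw0 mode0r scaler0.
rewrite r0_int second_vanishes scaler0 subr0 in jac.
have P_first : P (\sum_(k < K) jac1 mode u v w r0 r1 r2 k).
  rewrite jac; case: ifP => _; last exact: subspace0.
  apply: subspaceZ => //; apply: subspace_sum => // k.
  by apply: subspaceZ => //; apply: P_iterate.
have first_term : jac1 mode u v w r0 r1 r2 0 = mode u m (mode v n w).
  rewrite /jac1 /cbinom big_ord0 expr0 mulr1 fact0 mul1r invr1 scale1r.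
  by congr (mode u _ (mode v _ w)); rewrite /r0 /r1 /r2; ring.
move: P_first; rewrite -first_term.
have -> : \sum_(k < K) jac1 mode u v w r0 r1 r2 k = \sum_(k < K.+1) jac1 mode u v w r0 r1 r2 k.
  by rewrite big_ord_recr /= K_trunc // addr0.
rewrite big_ord_recl => P_all.
rewrite -[jac1 _ _ _ _ _ _ _ 0](addrK (\sum_(i < K) jac1 mode u v w r0 r1 r2 (bump 0 i))).
apply: subspaceB => //; apply: subspace_sum => // i; rewrite /jac1.
apply: subspaceZ => //.
have -> : (bump 0 i)%:R - 1 - r2 = n + i.+1%:R by rewrite /bump add1n /r2; ring.
exact: P_higher.
Qed.

Section ModeSpan.

Variable W : V -> Prop.

Inductive mode_span : V -> Prop :=
| mode_span0 : mode_span 0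
| mode_span_mode b v n w : inVa pr b v -> W w -> mode_span (mode v n w)
| mode_spanD x y : mode_span x -> mode_span y -> mode_span (x + y)
| mode_spanZ c x : mode_span x -> mode_span (c *: x).

Lemma mode_span_subspace : subspace mode_span.
Proof. by split=> [|c x y Sx Sy]; do ![constructor]. Qed.

Variable a : A.
Hypothesis W_a : forall w, W w -> inVa pr a w.

Lemma mode_mode_in_span c b u v w : inVa pr c u -> inVa pr b v -> W w ->
  forall n m, mode_span (mode u m (mode v n w)).
Proof.
move=> u_c v_b Ww; have w_a := W_a Ww.
have [_ [N vwN]] := mode_truncation V_AIA v_b w_a.
apply: (@int_ray_ind _ (fun n => forall m, mode_span (mode u m (mode v n w))) (bh b a - 1) N)
  => [n below | n IHn] m.
  have -> : mode v n w = 0.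
    apply/eqP; apply: contraT => vw_neq0; have [j [Nj ej]] := vwN _ vw_neq0.
    have : j < N by apply: below; rewrite -ej; ring.
    lia.
  by rewrite mode0r; constructor.
have [p uw0] := modes_vanish_above (m - bh c b) u_c w_a.
apply: (mode_mode_jacobi mode_span_subspace u_c v_b w_a uw0) => [j l | m' k].
  exact: mode_span_mode ((mode_truncation V_AIA u_c v_b).1 j) Ww.
exact: IHn.
Qed.

Lemma mode_span_closed u m x : mode_span x -> mode_span (mode u m x).
Proof.
elim=> [|b v n w v_b Ww|x1 x2 _ IH1 _ IH2|c x1 _ IH1].
- by rewrite mode0r; constructor.
- have [s [_ ->]] := pr_decomp V_AIA u; rewrite mode_suml.
  apply: (subspace_sum mode_span_subspace) => p.
  exact: (mode_mode_in_span (inVa_pr p.2 u) v_b Ww n m).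
- by rewrite modeDr; constructor.
- by rewrite modeZr; constructor.
Qed.

Lemma mode_span_graded : Agraded pr mode_span.
Proof.
move=> x; elim=> [|b v n w v_b Ww|x1 x2 _ [s [-> s_ok]] _ [t [-> t_ok]]|c x1 _ [s [-> s_ok]]].
- by exists [::]; rewrite big_nil.
- exists [:: (b + a, mode v n w)]; rewrite big_seq1; split=> // p.
  rewrite inE => /eqP -> /=; split; first exact: mode_span_mode v_b Ww.
  exact: (mode_truncation V_AIA v_b (W_a Ww)).1.
- exists (s ++ t); rewrite big_cat; split=> // p.
  by rewrite mem_cat => /orP [/s_ok | /t_ok].
- exists [seq (p.1, c *: p.2) | p <- s]; rewrite big_map scaler_sumr; split=> // q.
  case/mapP=> p p_s -> /=; have [Sp p_a] := s_ok p p_s.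
  by split; [exact: mode_spanZ | exact: inVaZ].
Qed.

Hypothesis W_sub : subspace W.
Hypothesis W_closed : forall u n w, inVa pr 0 u -> W w -> W (mode u n w).

Lemma mode_span_split x : mode_span x ->
  exists y z, [/\ x = y + z, W y & forall n, pr a n z = 0].
Proof.
elim=> [|b v n w v_b Ww|x1 x2 _ [y1 [z1 [-> Wy1 z1_a]]] _ [y2 [z2 [-> Wy2 z2_a]]]|
        c x1 _ [y [z [-> Wy z_a]]]].
- by exists 0, 0; split; [rewrite addr0 | exact: subspace0 | move=> n; rewrite pr0].
- have [b0|b_neq0] := eqVneq b 0.
    exists (mode v n w), 0; split; [by rewrite addr0 | | by move=> k; rewrite pr0].
    by apply: W_closed Ww; rewrite -b0.
  exists 0, (mode v n w); split; [by rewrite add0r | exact: subspace0 |].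
  move=> k; apply: (mode_truncation V_AIA v_b (W_a Ww)).1.
  by apply: contra_neq b_neq0 => /eqP; rewrite -subr_eq subrr eq_sym => /eqP.
- exists (y1 + y2), (z1 + z2); split; first by rewrite addrACA.
    exact: subspaceD.
  by move=> k; rewrite prD z1_a z2_a addr0.
- exists (c *: y), (c *: z); split; first by rewrite scalerDr.
    exact: subspaceZ.
  by move=> k; rewrite prZ z_a scaler0.
Qed.

End ModeSpan.

Lemma simple_Va_of_simple : simple_AIA pr mode -> forall a, simple_Va_module pr mode a.
Proof.
move=> V_simple a W W_sub W_a W_closed.
have [[w0 [Ww0 w0_neq0]]|W0] := pselect (exists w0, W w0 /\ w0 <> 0); last first.
  by left=> w Ww; apply: contrapT => w_neq0; apply: W0; exists w.
right.
have [span0|spanT] :=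
  V_simple _ (mode_span_subspace W) (mode_span_graded W_a) (mode_span_closed W_a).
  exfalso; apply: w0_neq0; apply: span0.
  have <- : mode one (-1) w0 = w0 by rewrite (vacuum_id V_AIA) eqxx.
  exact: mode_span_mode inVa_one Ww0.
move=> x x_a; have [y [z [ex Wy z_a]]] := mode_span_split W_a W_sub W_closed (spanT x).
rewrite ex in x_a *.
suff -> : z = 0 by rewrite addr0.
apply: pr_eq0 => b n; have [-> //|b_neq_a] := eqVneq b a.
by have := x_a b n b_neq_a; rewrite prD (W_a y Wy) // add0r.
Qed.

End AIA.

Theorem mainTheorem14 (R : realType) (A : zmodType)
  (F : A -> A -> A -> R[i]) (Om : A -> A -> R[i]) (bh : A -> A -> R[i])
  (V : lmodType R[i]) (pr : A -> R[i] -> V -> V) (mode : V -> R[i] -> V -> V)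
  (one om : V) :
  normalized_abelian_3cocycle F Om ->
  (forall a1 a2, cexp ((2%:R * ipi R) * bh a1 a2) = Om a1 a2 * Om a2 a1) ->
  is_AIA F Om bh pr mode one om ->
  simple_AIA pr mode ->
  (forall a : A, simple_Va_module pr mode a) /\ simple_Va_module pr mode 0.
Proof.
move=> _ _ V_AIA V_simple.
by split=> [a|]; apply: simple_Va_of_simple V_AIA V_simple _.
Qed.
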